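(* Let $d,N\ge1$ and $P\in\{0,\dots,d-1\}$. Let $\mathcal H_N^{(P)}$ be the subspace of the bosonic $N$-particle space $\mathrm{Sym}^N(\mathbb C^d)$ spanned by the permanents $|m_0,\dots,m_{d-1}\rangle$ with $\sum_k m_k=N$ and $\sum_{k=0}^{d-1}k\,m_k\equiv P\pmod d$, and let $W$ be any Hermitian operator on $\mathcal H_N^{(P)}$. Define, for $m\in\mathbb R^d$, $$\mathcal F_p^{(P)}(m)=\min\{\langle\Psi|W|\Psi\rangle:\Psi\in\mathcal H_N^{(P)},\|\Psi\|=1,\langle\Psi|n_k|\Psi\rangle=m_k\ \forall k\},\qquad \mathcal F_e^{(P)}(m)=\min\{\mathrm{Tr}(\Gamma W):\Gamma\text{ density operator on }\mathcal H_N^{(P)},\ \mathrm{Tr}(\Gamma n_k)=m_k\ \forall k\},$$ with domain the set of $m$ for which the respective constraint set is nonempty. Then the domains of $\mathcal F_p^{(P)}$ and $\mathcal F_e^{(P)}$ coincide and both equal $$\mathrm{conv}\Big\{m\in\mathbb N_0^d:\ \sum_{k=0}^{d-1}m_k=N,\ \sum_{k=0}^{d-1}k\,m_k\equiv P\pmod d\Big\}.$$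
   Context: $b_k^\dagger,b_k$ are bosonic creation/annihilation operators for momentum mode $k\in\{0,\dots,d-1\}$ on a $d$-site periodic lattice, $n_k=b_k^\dagger b_k$ is the momentum-space number operator, and $|m_0,\dots,m_{d-1}\rangle\propto\prod_k(b_k^\dagger)^{m_k}|\mathrm{vac}\rangle$ is the normalized permanent with $m_k$ bosons in momentum $k$. *)

From mathcomp Require Import all_boot all_order all_fingroup all_algebra.
From mathcomp Require Import complex.
Set Implicit Arguments. Unset Strict Implicit. Unset Printing Implicit Defensive.
Import Order.TTheory GRing.Theory Num.Theory.
Local Open Scope ring_scope.

Section Bosons.
Variables (R : rcfType) (d N : nat) (P : 'I_d).
Local Notation C := R[i].

(* Tensor-product basis of (C^d)^{\otimes N}: each particle j < N sits in
   momentum mode x j < d. A vector is a function Conf -> C. *)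
Definition Conf := {ffun 'I_N -> 'I_d}.

(* number of particles in mode k in basis configuration x:
   n_k = sum_j (|k><k|)_j is diagonal in this basis with this eigenvalue *)
Definition occ (k : 'I_d) (x : Conf) : nat := #|[set j | x j == k]|.

Definition totmom (x : Conf) : nat := \sum_(j < N) (x j : nat).

Definition permconf (s : 'S_N) (x : Conf) : Conf := [ffun j => x (s j)].

(* membership in H_N^(P): symmetric (bosonic) vectors supported on
   basis configurations of total momentum = P mod d *)
Definition inH (v : Conf -> C) : Prop :=
  (forall (s : 'S_N) x, v (permconf s x) = v x) /\
  (forall x, (totmom x %% d)%N != P -> v x = 0).

Definition applyop (G : Conf -> Conf -> C) (v : Conf -> C) : Conf -> C :=
  fun x => \sum_y G x y * v y.

(* density operator on H_N^(P): Hermitian, positive semidefinite, trace one,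
   with range contained in H_N^(P) (hence, being Hermitian, it vanishes on
   the orthogonal complement: it is an operator on H_N^(P)). *)
Definition density_op (G : Conf -> Conf -> C) : Prop :=
  [/\ forall x y, G x y = (G y x)^*,
      forall v : Conf -> C, 0 <= \sum_x (v x)^* * applyop G v x,
      \sum_x G x x = 1 &
      forall v, inH (applyop G v)].

Definition expect_n (Psi : Conf -> C) (k : 'I_d) : C :=
  \sum_x (Psi x)^* * Psi x * (occ k x)%:R.

Definition trace_n (G : Conf -> Conf -> C) (k : 'I_d) : C :=
  \sum_x G x x * (occ k x)%:R.

Definition pure_domain (m : 'I_d -> R) : Prop :=
  exists Psi : Conf -> C,
    [/\ inH Psi, \sum_x (Psi x)^* * Psi x = 1 &
        forall k, expect_n Psi k = ((m k)%:C)%C].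

Definition ensemble_domain (m : 'I_d -> R) : Prop :=
  exists G : Conf -> Conf -> C,
    density_op G /\ forall k, trace_n G k = ((m k)%:C)%C.

(* occupation vectors m in N_0^d with sum_k m_k = N and sum_k k m_k = P mod d;
   every such m has m_k <= N, so they are represented in the finite type
   {ffun 'I_d -> 'I_N.+1} *)
Definition admissible (c : {ffun 'I_d -> 'I_N.+1}) : bool :=
  ((\sum_(k < d) (c k : nat))%N == N) && ((\sum_(k < d) (k : nat) * c k) %% d == P)%N.

Definition in_conv_admissible (m : 'I_d -> R) : Prop :=
  exists lam : {ffun 'I_d -> 'I_N.+1} -> R,
    [/\ forall c, 0 <= lam c,
        forall c, ~~ admissible c -> lam c = 0,
        \sum_c lam c = 1 &
        forall k, m k = \sum_c lam c * (c k : nat)%:R].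

End Bosons.

From mathcomp Require Import all_boot all_order all_fingroup all_algebra.
From mathcomp Require Import complex.
Set Implicit Arguments. Unset Strict Implicit. Unset Printing Implicit Defensive.
Import Order.TTheory GRing.Theory Num.Theory.
Local Open Scope ring_scope.

(* The number operators n_k are diagonal in the basis of particle
   configurations x, with eigenvalue the occupation vector occv x, and the
   configurations of the sector H_N^(P) are exactly those whose occupation
   vector is admissible.  The diagonal of a density operator on H_N^(P) is
   thus a probability distribution on such configurations, and its image
   under occv is a convex combination of admissible occupation vectors with
   the prescribed expectations.  Conversely, spreading the convex weight of
   each admissible vector c uniformly over the configurations x with
   occv x = c and taking square roots gives a symmetric unit vector of
   H_N^(P) (a superposition of permanents) with the same expectations; pure
   states are the rank-one density operators. *)

Section OccupationVectors.
Variables (d N : nat).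
Local Notation occvec := {ffun 'I_d -> 'I_N.+1}.

Lemma occ_le (k : 'I_d) (x : Conf d N) : (occ k x <= N)%N.
Proof. by rewrite /occ (leq_trans (max_card _)) ?card_ord. Qed.

Definition occv (x : Conf d N) : occvec := [ffun k => inord (occ k x)].

Lemma occvE k x : (occv x k : nat) = occ k x.
Proof. by rewrite ffunE inordK // ltnS occ_le. Qed.

Lemma occ_permconf s k (x : Conf d N) : occ k (permconf s x) = occ k x.
Proof.
rewrite /occ -(card_preimset [set j | x j == k] (@perm_inj _ s)).
by apply: eq_card => j; rewrite !inE ffunE.
Qed.

Lemma occv_permconf s (x : Conf d N) : occv (permconf s x) = occv x.
Proof. by apply/ffunP => k; rewrite !ffunE occ_permconf. Qed.

Lemma sum_occ (x : Conf d N) : (\sum_k occ k x)%N = N.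
Proof.
rewrite -{2}[N]card_ord -sum1_card (partition_big x predT) //=.
by apply: eq_bigr => k _; rewrite sum1_card; apply: eq_card => j; rewrite inE.
Qed.

Lemma totmom_occ (x : Conf d N) : totmom x = (\sum_(k < d) k * occ k x)%N.
Proof.
rewrite /totmom (partition_big x predT) //=; apply: eq_bigr => k _.
rewrite (eq_bigr (fun _ => (k : nat))) => [|j /eqP -> //].
by rewrite sum_nat_const mulnC; congr (_ * _)%N; apply: eq_card => j; rewrite inE.
Qed.

Lemma admissible_occv (P : 'I_d) x : admissible P (occv x) = (totmom x %% d == P)%N.
Proof.
rewrite /admissible totmom_occ.
under eq_bigr do rewrite occvE.
by rewrite sum_occ eqxx; under eq_bigr do rewrite occvE.
Qed.

(* Realised by listing c_0 copies of mode 0, then c_1 copies of mode 1, ... *)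
Lemma occv_surj (c : occvec) :
  (\sum_k (c k : nat))%N = N -> exists x : Conf d N, occv x = c.
Proof.
move=> sum_c; pose s := flatten [seq nseq (c k : nat) k | k <- enum 'I_d].
have size_s : size s == N.
  apply/eqP; rewrite size_flatten /shape -map_comp sumnE big_map big_enum /=.
  by rewrite -[RHS]sum_c; apply: eq_bigr => k _; rewrite /= size_nseq.
pose t := Tuple size_s; exists [ffun j => tnth t j].
apply/ffunP => k; apply: val_inj; rewrite /= occvE /occ.
have -> : #|[set j | [ffun j => tnth t j] j == k]| = count (pred1 k) t.
  rewrite -[in RHS](map_tnth_enum t) count_map cardE size_filter -enumT.
  by apply: eq_count => j; rewrite !inE ffunE.
rewrite count_flatten -map_comp sumnE big_map big_enum /= (bigD1 k) //=.
rewrite count_nseq /= eqxx mul1n big1 ?addn0 // => k' /negPf.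
by rewrite count_nseq /= => ->.
Qed.

End OccupationVectors.
Arguments occv {d N} x.

Lemma sum_pushforward (V : pzSemiRingType) (I J : finType) (f : I -> J)
    (w : I -> V) (F : J -> V) :
  \sum_i w i * F (f i) = \sum_j (\sum_(i | f i == j) w i) * F j.
Proof.
rewrite (partition_big f predT) //=; apply: eq_bigr => j _.
by rewrite mulr_suml; apply: eq_bigr => i /eqP ->.
Qed.

Section ConvexHull.
Variables (R : rcfType) (d N : nat) (P : 'I_d).
Local Notation occvec := {ffun 'I_d -> 'I_N.+1}.

Lemma in_conv_admissible_pushforward (w : Conf d N -> R) (m : 'I_d -> R) :
    (forall x, 0 <= w x) -> (forall x, (totmom x %% d != P)%N -> w x = 0) ->
    \sum_x w x = 1 -> (forall k, m k = \sum_x w x * (occ k x)%:R) ->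
  in_conv_admissible N P m.
Proof.
move=> w_ge0 w_out w_sum1 mE.
exists (fun c => \sum_(x | occv x == c) w x); split.
- by move=> c; apply: sumr_ge0.
- move=> c c_adm; apply: big1 => x /eqP occv_x; apply: w_out.
  by rewrite -admissible_occv occv_x.
- by rewrite -w_sum1 [RHS](partition_big occv predT).
- move=> k; rewrite mE.
  under eq_bigr => x _ do rewrite -occvE.
  by rewrite (sum_pushforward occv w (fun c : occvec => (c k : nat)%:R)).
Qed.

Definition fibre_card (c : occvec) := #|[set x : Conf d N | occv x == c]|.

Variable lam : occvec -> R.
Hypothesis lam_adm : forall c, ~~ admissible P c -> lam c = 0.

Definition spread_weight (x : Conf d N) := lam (occv x) / (fibre_card (occv x))%:R.

Lemma spread_weight_permconf s x : spread_weight (permconf s x) = spread_weight x.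
Proof. by rewrite /spread_weight occv_permconf. Qed.

Lemma spread_weight_out x : (totmom x %% d != P)%N -> spread_weight x = 0.
Proof. by rewrite -admissible_occv /spread_weight => /lam_adm ->; rewrite mul0r. Qed.

Lemma sum_fibre_spread_weight c : \sum_(x | occv x == c) spread_weight x = lam c.
Proof.
under eq_bigr => x /eqP occv_x do rewrite /spread_weight occv_x.
have [-> | lam_c] := eqVneq (lam c) 0; first by rewrite big1 // => x _; rewrite mul0r.
have [x occv_x] : exists x, occv x = c.
  apply: occv_surj.
  by have /andP[/eqP] : admissible P c by apply: contraNT lam_c => /lam_adm ->.
have fibre_gt0 : (0 < fibre_card c)%N by apply/card_gt0P; exists x; rewrite inE occv_x.
rewrite sumr_const (_ : #|_| = fibre_card c); last by apply: eq_card => y; rewrite !inE.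
by rewrite -[_ *+ _]mulr_natr divfK // pnatr_eq0 -lt0n.
Qed.

Lemma sum_spread_weight (F : occvec -> R) :
  \sum_x spread_weight x * F (occv x) = \sum_c lam c * F c.
Proof.
by rewrite sum_pushforward; apply: eq_bigr => c _; rewrite sum_fibre_spread_weight.
Qed.

End ConvexHull.

Section QuantumStates.
Variables (R : rcfType) (d N : nat) (P : 'I_d).
Local Notation C := R[i].

Definition rank_one (Psi : Conf d N -> C) (x y : Conf d N) : C := Psi x * (Psi y)^*.

Lemma applyop_rank_one Psi v x :
  applyop (rank_one Psi) v x = Psi x * \sum_y (Psi y)^* * v y.
Proof. by rewrite /applyop mulr_sumr; apply: eq_bigr => y _; rewrite mulrA. Qed.

Lemma rank_one_density_op Psi :
  inH P Psi -> \sum_x (Psi x)^* * Psi x = 1 -> density_op P (rank_one Psi).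
Proof.
move=> [Psi_sym Psi_out] Psi_norm; split.
- by move=> x y; rewrite /rank_one rmorphM /= conjCK mulrC.
- move=> v; under eq_bigr do rewrite applyop_rank_one mulrA.
  rewrite -mulr_suml -[X in X * _]conjCK rmorph_sum /=.
  under [X in X^* * _]eq_bigr do rewrite rmorphM /= conjCK mulrC.
  by rewrite mulrC mul_conjC_ge0.
- by rewrite -Psi_norm; apply: eq_bigr => x _; rewrite mulrC.
- move=> v; split=> [s x | x /Psi_out Psi_x]; rewrite !applyop_rank_one.
    by rewrite Psi_sym.
  by rewrite Psi_x mul0r.
Qed.

Lemma trace_n_rank_one Psi k : trace_n (rank_one Psi) k = expect_n Psi k.
Proof. by apply: eq_bigr => x _; rewrite /rank_one (mulrC (Psi x)). Qed.

Lemma pure_domain_ensemble_domain (m : 'I_d -> R) :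
  pure_domain N P m -> ensemble_domain N P m.
Proof.
move=> [Psi [Psi_H Psi_norm Psi_n]]; exists (rank_one Psi).
by split=> [|k]; [apply: rank_one_density_op | rewrite trace_n_rank_one].
Qed.

Lemma applyop_delta (G : Conf d N -> Conf d N -> C) y x :
  applyop G (fun z => (z == y)%:R) x = G x y.
Proof.
rewrite /applyop (bigD1 y) //= eqxx mulr1 big1 ?addr0 // => z /negPf ->.
by rewrite mulr0.
Qed.

Lemma density_op_diag_ge0 (G : Conf d N -> Conf d N -> C) x :
  density_op P G -> 0 <= G x x.
Proof.
move=> [_ G_psd _ _]; have := G_psd (fun z => (z == x)%:R).
rewrite (bigD1 x) //= big1 ?addr0 => [|z /negPf ->]; last by rewrite rmorph0 mul0r.
by rewrite eqxx rmorph1 mul1r applyop_delta.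
Qed.

Lemma density_op_out (G : Conf d N -> Conf d N -> C) x y :
  density_op P G -> (totmom x %% d != P)%N -> G x y = 0.
Proof.
by move=> [_ _ _ G_range] /(G_range (fun z => (z == y)%:R)).2; rewrite applyop_delta.
Qed.

Lemma ensemble_domain_conv_admissible (m : 'I_d -> R) :
  ensemble_domain N P m -> in_conv_admissible N P m.
Proof.
move=> [G [G_dens G_n]]; have [_ _ G_tr _] := G_dens.
have G_diag x : ((complex.Re (G x x))%:C)%C = G x x.
  exact/RRe_real/ger0_real/density_op_diag_ge0.
apply: (in_conv_admissible_pushforward (w := fun x => complex.Re (G x x)))
  => [x | x out | | k].
- by rewrite -ler0c G_diag density_op_diag_ge0.
- by rewrite density_op_out.
- apply: complexI; rewrite rmorph_sum rmorph1 -G_tr.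
  by apply: eq_bigr => x _; exact: G_diag.
- apply: complexI; rewrite -G_n rmorph_sum; apply: eq_bigr => x _.
  by rewrite rmorphM /= G_diag rmorph_nat.
Qed.

Lemma conv_admissible_pure_domain (m : 'I_d -> R) :
  in_conv_admissible N P m -> pure_domain N P m.
Proof.
move=> [lam [lam_ge0 lam_adm lam_sum1 mE]].
pose w := spread_weight lam; pose Psi x := ((Num.sqrt (w x))%:C)%C.
have Psi_sq x : (Psi x)^* * Psi x = ((w x)%:C)%C.
  by rewrite conj_Creal ?complex_real // -rmorphM -expr2 sqr_sqrtr ?divr_ge0.
have w_sum1 : \sum_x w x = 1.
  rewrite -lam_sum1 (partition_big occv predT) //.
  by apply: eq_bigr => c _; exact: sum_fibre_spread_weight lam_adm c.
exists Psi; split.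
- split=> [s x | x out]; first by rewrite /Psi /w spread_weight_permconf.
  by rewrite /Psi /w (spread_weight_out lam_adm out) sqrtr0.
- by under eq_bigr do rewrite Psi_sq; rewrite -rmorph_sum w_sum1.
- move=> k; rewrite mE -(sum_spread_weight lam_adm (fun c => (c k : nat)%:R)).
  rewrite /expect_n rmorph_sum; apply: eq_bigr => x _.
  by rewrite Psi_sq [RHS]rmorphM rmorph_nat occvE.
Qed.

End QuantumStates.

Theorem theorem3p2 (R : rcfType) (d N : nat) (P : 'I_d)
    (hd : (0 < d)%N) (hN : (0 < N)%N) :
  forall m : 'I_d -> R,
    (pure_domain N P m <-> in_conv_admissible N P m) /\
    (ensemble_domain N P m <-> in_conv_admissible N P m).
Proof.
move=> m; split; split.
- by move/pure_domain_ensemble_domain/ensemble_domain_conv_admissible.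
- exact: conv_admissible_pure_domain.
- exact: ensemble_domain_conv_admissible.
- by move/conv_admissible_pure_domain/pure_domain_ensemble_domain.
Qed.
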